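(* Let $\mathcal X=\{1,\dots,n\}$, $N\ge 1$, and for $t=0,\dots,N-1$ let $M(t)=[m_{ij}(t)]_{i,j=1}^n$ be matrices with nonnegative entries such that the product $M(N-1)M(N-2)\cdots M(0)$ has all entries positive. Let $\nu_0,\nu_N$ be probability distributions on $\mathcal X$, and let $\varphi,\hat\varphi$ be nonnegative functions on $\{0,\dots,N\}\times\mathcal X$ solving the Schrödinger system $\varphi(t,i)=\sum_j m_{ij}(t)\varphi(t+1,j)$, $\hat\varphi(t+1,j)=\sum_i m_{ij}(t)\hat\varphi(t,i)$ ($0\le t\le N-1$), $\varphi(0,x)\hat\varphi(0,x)=\nu_0(x)$, $\varphi(N,x)\hat\varphi(N,x)=\nu_N(x)$, with $\varphi>0$, and let $\Pi(t)=\operatorname{diag}(\varphi(t))^{-1}M(t)\operatorname{diag}(\varphi(t+1))$ be the one-step transition matrices of the bridge $\mathfrak M^*[\nu_0,\nu_N]$. Then for any probability distributions $\rho_0,\rho_N$ on $\mathcal X$, the solution of the Schrödinger bridge problem with marginals $\rho_0,\rho_N$ and prior transition matrices $\Pi(t)$ coincides with the solution of the Schrödinger bridge problem with marginals $\rho_0,\rho_N$ and prior transition matrices $M(t)$; i.e. both have initial marginal $\rho_0$ and the same transition matrices $Q^*(t)=\operatorname{diag}(\psi_1(t))^{-1}M(t)\operatorname{diag}(\psi_1(t+1))$, where $(\psi_1,\hat\psi_1)$ solves the Schrödinger system for $M(t)$ with boundary data $\rho_0,\rho_N$.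
   Context: Schrödinger bridge problem (SBP): given nonnegative weights $m_{ij}(t)$ and a positive initial measure $\mu_0$ on $\mathcal X$, the prior is the (not necessarily probability) measure on paths $x=(x_0,\dots,x_N)\in\mathcal X^{N+1}$ given by $\mathfrak M(x)=\mu_0(x_0)m_{x_0x_1}(0)\cdots m_{x_{N-1}x_N}(N-1)$. For probability distributions $\nu_0,\nu_N$ on $\mathcal X$, the SBP asks for the minimizer $\mathfrak M^*[\nu_0,\nu_N]$ of the relative entropy $\mathbb D(P\|\mathfrak M)=\sum_x P(x)\log\frac{P(x)}{\mathfrak M(x)}$ (equal to $+\infty$ if the support of $P$ is not contained in that of $\mathfrak M$, with $0\log 0=0$) over probability distributions $P$ on paths with initial marginal $\nu_0$ and final marginal $\nu_N$. When the product $M(N-1)\cdots M(0)$ is entrywise positive, the solution is unique and is the Markov measure $\nu_0(x_0)\pi_{x_0x_1}(0)\cdots\pi_{x_{N-1}x_N}(N-1)$ with $\pi_{ij}(t)=m_{ij}(t)\varphi(t+1,j)/\varphi(t,i)$, $\varphi,\hat\varphi$ solving the Schrödinger system stated in the claim. The solution does not depend on the choice of positive initial measure $\mu_0$ of the prior. *)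

From HB Require Import structures.
From mathcomp Require Import all_boot all_order all_algebra.
From mathcomp Require Import reals ereal exp.
Set Implicit Arguments. Unset Strict Implicit. Unset Printing Implicit Defensive.
Import Order.TTheory GRing.Theory Num.Theory.
Local Open Scope ring_scope.

Section SB.
Variables (R : realType) (n N : nat).

Definition spath := {ffun 'I_N.+1 -> 'I_n}.

Definition tcur (t : 'I_N) : 'I_N.+1 := widen_ord (leqnSn N) t.
Definition tnext (t : 'I_N) : 'I_N.+1 := lift ord0 t.

(* ordered product M(N-1) * ... * M(0) *)
Definition mxprod (M : nat -> 'M[R]_n) : 'M[R]_n :=
  foldr (fun t A => A *m M t) 1%:M (iota 0 N).

Definition is_distr (nu : 'I_n -> R) : Prop :=
  (forall i, 0 <= nu i) /\ \sum_i nu i = 1.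

(* prior (possibly non-probability) measure on paths *)
Definition prior (mu0 : 'I_n -> R) (M : nat -> 'M[R]_n) (x : spath) : R :=
  mu0 (x ord0) * \prod_(t < N) M t (x (tcur t)) (x (tnext t)).

Definition markov (nu0 : 'I_n -> R) (Q : nat -> 'M[R]_n) (x : spath) : R :=
  nu0 (x ord0) * \prod_(t < N) Q t (x (tcur t)) (x (tnext t)).

Definition marginal (P : spath -> R) (s : 'I_N.+1) (i : 'I_n) : R :=
  \sum_(x : spath | x s == i) P x.

Definition relent (P Mm : spath -> R) : \bar R :=
  if [exists x : spath, (P x != 0) && (Mm x == 0)] then +oo%E
  else (\sum_(x : spath) (if P x == 0 then 0 else P x * ln (P x / Mm x)))%:E.

Definition admissible (nu0 nuN : 'I_n -> R) (P : spath -> R) : Prop :=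
  (forall x, 0 <= P x) /\ \sum_x P x = 1 /\
  (forall i, marginal P ord0 i = nu0 i) /\
  (forall i, marginal P ord_max i = nuN i).

Definition SBP_solution (Mm : spath -> R) (nu0 nuN : 'I_n -> R) (P : spath -> R) : Prop :=
  admissible nu0 nuN P /\
  forall Q, admissible nu0 nuN Q -> (relent P Mm <= relent Q Mm)%E.

Definition schroedinger_system (M : nat -> 'M[R]_n) (nu0 nuN : 'I_n -> R)
    (phi phihat : nat -> 'I_n -> R) : Prop :=
  (forall t, (t < N)%N -> forall i, phi t i = \sum_j M t i j * phi t.+1 j) /\
  (forall t, (t < N)%N -> forall j, phihat t.+1 j = \sum_i M t i j * phihat t i) /\
  (forall x, phi 0%N x * phihat 0%N x = nu0 x) /\
  (forall x, phi N x * phihat N x = nuN x).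

Definition htransform (M : nat -> 'M[R]_n) (phi : nat -> 'I_n -> R) : nat -> 'M[R]_n :=
  fun t => \matrix_(i, j) (M t i j * phi t.+1 j / phi t i).

End SB.

From HB Require Import structures.
From mathcomp Require Import all_boot all_order all_algebra.
From mathcomp Require Import reals ereal exp.
From mathcomp Require Import ring lra.
From mathcomp Require boolp.
Set Implicit Arguments. Unset Strict Implicit. Unset Printing Implicit Defensive.
Import Order.TTheory GRing.Theory Num.Theory.
Local Open Scope ring_scope.

(* Multiplying a path measure by a positive endpoint factor f(x_0) g(x_N)
   shifts the relative entropy of every admissible P by the same constant
   E_rho0[ln f] + E_rhoN[ln g], so it does not change the Schroedinger bridge.
   Since the ratios phi(t+1)/phi(t) telescope along a path, the prior built
   from the h-transform of M by any positive phi is such a reweighting of the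
   prior built from M; this is the first claim.  The Markov measure Q built
   from psi is also an endpoint reweighting of the prior, and by the
   Schroedinger system its marginals are rho0 and rhoN.  A bridge problem
   whose prior is itself admissible is solved exactly by its prior (Gibbs'
   inequality), hence Q is the unique bridge for both priors. *)

Section PathSums.
Variables (R : comPzRingType) (n : nat).

Definition fcons {m} (a : 'I_n) (y : {ffun 'I_m -> 'I_n}) : {ffun 'I_m.+1 -> 'I_n} :=
  [ffun k => if unlift ord0 k is Some k' then y k' else a].

Lemma fcons0 m a y : @fcons m a y ord0 = a.
Proof. by rewrite ffunE unlift_none. Qed.

Lemma fconsS m a y k : @fcons m a y (lift ord0 k) = y k.
Proof. by rewrite ffunE liftK. Qed.

Lemma big_fcons m (F : {ffun 'I_m.+1 -> 'I_n} -> R) :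
  \sum_x F x = \sum_(a : 'I_n) \sum_(y : {ffun 'I_m -> 'I_n}) F (fcons a y).
Proof.
rewrite pair_big /= (reindex (fun p => fcons p.1 p.2)) //=.
exists (fun x => (x ord0, [ffun k => x (lift ord0 k)])) => [[a y] _ | x _] /=.
  by rewrite fcons0; congr pair; apply/ffunP => k; rewrite ffunE fconsS.
by apply/ffunP => k; rewrite ffunE; case: unliftP => [j ->|->]; rewrite ?ffunE.
Qed.

Lemma big_fcons_at m i (F : {ffun 'I_m.+1 -> 'I_n} -> R) :
  \sum_(x : {ffun 'I_m.+1 -> 'I_n} | x ord0 == i) F x =
  \sum_(y : {ffun 'I_m -> 'I_n}) F (fcons i y).
Proof.
rewrite big_mkcond big_fcons (bigD1 i) //= [X in _ + X]big1 => [|a ai].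
  by rewrite addr0; apply: eq_bigr => y _; rewrite fcons0 eqxx.
by apply: big1 => y _; rewrite fcons0 (negbTE ai).
Qed.

Lemma tcur_lift m (t : 'I_m) : tcur (lift ord0 t) = lift ord0 (tcur t).
Proof. exact: val_inj. Qed.

Lemma tnext_lift m (t : 'I_m) : tnext (lift ord0 t) = lift ord0 (tnext t).
Proof. exact: val_inj. Qed.

Lemma ord_max_lift m : (ord_max : 'I_m.+2) = lift ord0 ord_max.
Proof. exact: val_inj. Qed.

Definition path_weight {m} (A : nat -> 'M[R]_n) (x : {ffun 'I_m.+1 -> 'I_n}) : R :=
  \prod_(t < m) A t (x (tcur t)) (x (tnext t)).

Lemma path_weight_fcons m A a (y : {ffun 'I_m.+1 -> 'I_n}) :
  path_weight A (fcons a y) = A 0%N a (y ord0) * path_weight (fun t => A t.+1) y.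
Proof.
rewrite /path_weight big_ord_recl.
have -> : tcur (ord0 : 'I_m.+1) = ord0 by apply: val_inj.
have -> : tnext (ord0 : 'I_m.+1) = lift ord0 ord0 by apply: val_inj.
rewrite fcons0 fconsS; congr (_ * _).
by apply: eq_bigr => t _; rewrite tcur_lift tnext_lift !fconsS.
Qed.

Lemma path_weight0 A (x : {ffun 'I_1 -> 'I_n}) : path_weight A x = 1.
Proof. by rewrite /path_weight big_ord0. Qed.

Lemma sum_path_weight_backward m (A : nat -> 'M[R]_n) (h : nat -> 'I_n -> R) :
  (forall t, (t < m)%N -> forall i, h t i = \sum_j A t i j * h t.+1 j) ->
  forall i, \sum_(x : {ffun 'I_m.+1 -> 'I_n} | x ord0 == i)
     path_weight A x * h m (x ord_max) = h 0%N i.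
Proof.
elim: m A h => [|m IH] A h hA i; rewrite big_fcons_at.
  have -> : (ord_max : 'I_1) = ord0 by apply: val_inj.
  under eq_bigr => y _ do rewrite path_weight0 mul1r fcons0.
  by rewrite sumr_const card_ffun !card_ord expn0.
under eq_bigr => y _ do rewrite path_weight_fcons ord_max_lift fconsS -mulrA.
rewrite (partition_big (fun y : {ffun 'I_m.+1 -> 'I_n} => y ord0) predT) //= hA //.
apply: eq_bigr => j _; under eq_bigr => y /eqP y0 do rewrite y0.
rewrite -big_distrr /= (IH (fun t => A t.+1) (fun t => h t.+1)) // => t tm.
exact: hA.
Qed.

Lemma sum_path_weight_forward m (A : nat -> 'M[R]_n) (h : nat -> 'I_n -> R) :
  (forall t, (t < m)%N -> forall j, h t.+1 j = \sum_i A t i j * h t i) ->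
  forall j, \sum_(x : {ffun 'I_m.+1 -> 'I_n} | x ord_max == j)
     h 0%N (x ord0) * path_weight A x = h m j.
Proof.
elim: m A h => [|m IH] A h hA j.
  have -> : (ord_max : 'I_1) = ord0 by apply: val_inj.
  rewrite big_fcons_at.
  under eq_bigr => y _ do rewrite path_weight0 mulr1 fcons0.
  by rewrite sumr_const card_ffun !card_ord expn0.
rewrite big_mkcond big_fcons exchange_big /=.
rewrite -(IH (fun t => A t.+1) (fun t => h t.+1)) => [|t tm]; last exact: hA.
rewrite [RHS]big_mkcond; apply: eq_bigr => y _.
under eq_bigr => a _ do rewrite ord_max_lift fconsS.
case: eqP => _; last by rewrite big1.
rewrite hA // big_distrl; apply: eq_bigr => a _ /=.
by rewrite path_weight_fcons fcons0 mulrA [h 0%N a * _]mulrC.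
Qed.

End PathSums.

Lemma path_weight_ge0 (R : numDomainType) n m (A : nat -> 'M[R]_n)
    (x : {ffun 'I_m.+1 -> 'I_n}) :
  (forall t i j, (t < m)%N -> 0 <= A t i j) -> 0 <= path_weight A x.
Proof. by move=> A_ge0; apply: prodr_ge0 => t _; apply: A_ge0. Qed.

Section Entropy.
Variable R : realType.

Lemma ln_le_subr1 (y : R) : 0 < y -> ln y <= y - 1 ?= iff (y == 1).
Proof.
move=> y0; split.
  by have := @le_ln1Dx R (y - 1); rewrite (addrC 1) subrK; apply; lra.
apply/eqP/eqP => [lny | ->]; last by rewrite ln1 subrr.
have [//|y1] := eqVneq y 1.
have := expR_gt1Dx (x := ln y).
rewrite lnK ?posrE // ln_eq0 // => /(_ y1); lra.
Qed.

Definition kl_term (p q : R) := if p == 0 then 0 else p * ln (p / q).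

Lemma kl_term_ge_sub (p q : R) : 0 <= p -> 0 <= q -> (p != 0 -> q != 0) ->
  p - q <= kl_term p q ?= iff (p == q).
Proof.
rewrite /kl_term le0r => /predU1P[-> q0 _ | p0 q0 /(_ (lt0r_neq0 p0)) qn0].
  by rewrite eqxx; split; rewrite sub0r ?oppr_le0 // oppr_eq0 eq_sym.
have {}q0 : 0 < q by rewrite lt_def qn0.
rewrite (gt_eqF p0) -invf_div lnV ?posrE ?divr_gt0 // mulrN.
have [le_ln eq_ln] := ln_le_subr1 (divr_gt0 q0 p0).
have e : q - p = p * (q / p - 1) by field; rewrite gt_eqF.
split.
  by have := ler_wpM2l (ltW p0) le_ln; rewrite -e; lra.
apply/eqP/eqP => [h | <-]; last by rewrite divff ?lt0r_neq0 // ln1 mulr0 oppr0 subrr.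
have /eqP : p * ln (q / p) = p * (q / p - 1) by rewrite -e -[LHS]opprK -h opprB.
rewrite (inj_eq (mulfI (lt0r_neq0 p0))) eq_ln => /eqP qp1.
by rewrite -[q](divfK (lt0r_neq0 p0)) qp1 mul1r.
Qed.

Lemma gibbs_leif (T : finType) (P Q : T -> R) :
  (forall x, 0 <= P x) -> (forall x, 0 <= Q x) -> \sum_x P x = \sum_x Q x ->
  (forall x, P x != 0 -> Q x != 0) ->
  0 <= \sum_x kl_term (P x) (Q x) ?= iff [forall x, P x == Q x].
Proof.
move=> P0 Q0 sPQ PQ.
have := @leif_sum _ _ xpredT (fun x => P x == Q x) (fun x => P x - Q x)
  (fun x => kl_term (P x) (Q x)).
by rewrite sumrB sPQ subrr; apply=> x _; apply: kl_term_ge_sub (P0 x) (Q0 x) (PQ x).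
Qed.

Lemma kl_term_mulr (p q w : R) : 0 <= p -> 0 < q -> 0 < w ->
  kl_term p q = kl_term p (q * w) + p * ln w.
Proof.
rewrite /kl_term le0r => /predU1P[->|p0 q0 w0]; first by rewrite eqxx mul0r addr0.
rewrite (gt_eqF p0) -mulrDr !ln_div ?lnM ?posrE ?mulr_gt0 //.
by congr (_ * _); ring.
Qed.

Variables n N : nat.
Implicit Types P Q Mm : spath n N -> R.

Lemma support_cases P Q :
  (exists2 x, P x != 0 & Q x = 0) \/ (forall x, P x != 0 -> Q x != 0).
Proof.
have [/existsP[x /andP[Px /eqP Qx]]|PQ] := boolP [exists x, (P x != 0) && (Q x == 0)].
  by left; exists x.
by right=> x Px; move/existsPn: PQ => /(_ x); rewrite Px.
Qed.

Lemma relent_fin P Q : (forall x, P x != 0 -> Q x != 0) ->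
  relent P Q = (\sum_x kl_term (P x) (Q x))%:E.
Proof.
move=> PQ; rewrite /relent ifF //; apply/existsPn => x.
by apply/negP => /andP[/PQ/negbTE->].
Qed.

Lemma relent_infty P Q : (exists2 x, P x != 0 & Q x = 0) -> relent P Q = +oo%E.
Proof.
by case=> x Px Qx; rewrite /relent ifT //; apply/existsP; exists x; rewrite Px Qx eqxx.
Qed.

Lemma relent_ge0 P Q : (forall x, 0 <= P x) -> (forall x, 0 <= Q x) ->
  \sum_x P x = \sum_x Q x -> (0 <= relent P Q)%E.
Proof.
move=> P0 Q0 sPQ; have [/relent_infty->|PQ] := support_cases P Q; first exact: leey.
by rewrite relent_fin // lee_fin; have [] := gibbs_leif P0 Q0 sPQ PQ.
Qed.

Lemma relent_eq0 P Q : (forall x, 0 <= P x) -> (forall x, 0 <= Q x) ->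
  \sum_x P x = \sum_x Q x -> relent P Q = 0%E -> forall x, P x = Q x.
Proof.
move=> P0 Q0 sPQ; have [/relent_infty->//|PQ] := support_cases P Q.
rewrite relent_fin // => -[/esym/eqP]; rewrite (eq_leif (gibbs_leif P0 Q0 sPQ PQ)).
by move=> /forallP PQ' x; apply/eqP.
Qed.

Lemma relentxx P : relent P P = 0%E.
Proof.
rewrite relent_fin // big1 // => x _; rewrite /kl_term.
by case: eqP => // /eqP Px; rewrite divff // ln1 mulr0.
Qed.

Lemma relent_mulr P Mm (w : spath n N -> R) :
    (forall x, 0 <= P x) -> (forall x, 0 <= Mm x) -> (forall x, P x != 0 -> 0 < w x) ->
  relent P Mm = (relent P (fun x => Mm x * w x)%R + (\sum_x P x * ln (w x))%:E)%E.
Proof.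
move=> P0 M0 w0; have [[x Px Mx]|PM] := support_cases P Mm.
  by rewrite !relent_infty ?addye //; exists x; rewrite ?Mx ?mul0r.
have PMw x : P x != 0 -> Mm x * w x != 0.
  by move=> Px; rewrite mulf_neq0 ?PM // lt0r_neq0 ?w0.
rewrite !relent_fin // -EFinD -big_split; congr EFin; apply: eq_bigr => x _ /=.
have [->|Px] := eqVneq (P x) 0; first by rewrite /kl_term eqxx mul0r addr0.
by rewrite (@kl_term_mulr _ _ (w x)) ?w0 // lt_def PM ?M0.
Qed.

End Entropy.

Section Marginals.
Variables (R : realType) (n N : nat).
Implicit Types P : spath n N -> R.

Lemma sum_marginal P s (F : 'I_n -> R) :
  \sum_x P x * F (x s) = \sum_i marginal P s i * F i.
Proof.
rewrite (partition_big (fun x : spath n N => x s) predT) //=.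
by apply: eq_bigr => i _; rewrite /marginal big_distrl; apply: eq_bigr => x /eqP ->.
Qed.

Lemma marginal_ge P s x : (forall y, 0 <= P y) -> P x <= marginal P s (x s).
Proof. by move=> P0; rewrite /marginal (bigD1 x) //= lerDl sumr_ge0. Qed.

Lemma sum_endpoints (nu0 nuN f g : 'I_n -> R) P : admissible nu0 nuN P ->
  \sum_x P x * (f (x ord0) + g (x ord_max)) = \sum_i nu0 i * f i + \sum_j nuN j * g j.
Proof.
case=> _ [_ [P_0 P_N]]; under eq_bigr do rewrite mulrDr.
rewrite big_split /= !sum_marginal.
by congr (_ + _); apply: eq_bigr => i _; rewrite ?P_0 ?P_N.
Qed.

Lemma admissible_support (nu0 nuN : 'I_n -> R) P x :
  admissible nu0 nuN P -> P x != 0 ->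
  (nu0 (x ord0) != 0) && (nuN (x ord_max) != 0).
Proof.
case=> P0 [_ [P_0 P_N]] Px; have Px_gt0 : 0 < P x by rewrite lt_def Px P0.
rewrite -P_0 -P_N !gt_eqF //; exact: lt_le_trans (marginal_ge _ _ P0).
Qed.

End Marginals.

Definition endpoint_reweight (R : realType) n N (Mm : spath n N -> R)
    (f g : 'I_n -> R) : spath n N -> R :=
  fun x => Mm x * (f (x ord0) * g (x ord_max)).

Section Bridge.
Variables (R : realType) (n N : nat) (nu0 nuN : 'I_n -> R).
Implicit Types P Q Mm : spath n N -> R.

Lemma SBP_solution_self Q P : admissible nu0 nuN Q ->
  SBP_solution Q nu0 nuN P <-> forall x, P x = Q x.
Proof.
move=> HQ; have relent_min P' : admissible nu0 nuN P' -> (relent Q Q <= relent P' Q)%E.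
  by case: HQ => Q0 [Q1 _] [P0 [P1 _]]; rewrite relentxx relent_ge0 // P1 Q1.
split=> [[HP /(_ Q HQ)] | PQ].
  rewrite relentxx; case: (HP) (HQ) => P0 [P1 _] [Q0 [Q1 _]] le0.
  apply: relent_eq0 => //; first by rewrite P1 Q1.
  by apply/le_anti; rewrite le0 relent_ge0 // P1 Q1.
have -> : P = Q by apply/boolp.funext.
by split=> // P' /relent_min.
Qed.

Variables (Mm : spath n N -> R) (f g : 'I_n -> R).
Hypothesis Mm_ge0 : forall x, 0 <= Mm x.
Hypothesis f_gt0 : forall i, nu0 i != 0 -> 0 < f i.
Hypothesis g_gt0 : forall j, nuN j != 0 -> 0 < g j.

Lemma relent_endpoint_reweight P : admissible nu0 nuN P ->
  relent P Mm = (relent P (endpoint_reweight Mm f g) +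
                 (\sum_i nu0 i * ln (f i) + \sum_j nuN j * ln (g j))%:E)%E.
Proof.
move=> HP; have [P0 _] := HP.
have fg_gt0 x : P x != 0 -> 0 < f (x ord0) /\ 0 < g (x ord_max).
  by move=> /(admissible_support HP)/andP[/f_gt0 ? /g_gt0 ?].
rewrite (relent_mulr (w := fun x => f (x ord0) * g (x ord_max))) // => [|x /fg_gt0[]];
  last exact: mulr_gt0.
rewrite -(sum_endpoints _ _ HP); congr (_ + (_)%:E)%E; apply: eq_bigr => x _.
have [->|/fg_gt0[f0 g0]] := eqVneq (P x) 0; first by rewrite !mul0r.
by rewrite lnM ?posrE.
Qed.

Lemma SBP_solution_endpoint_reweight P :
  SBP_solution Mm nu0 nuN P <-> SBP_solution (endpoint_reweight Mm f g) nu0 nuN P.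
Proof.
by split=> -[HP Pmin]; split=> // Q HQ; move: (Pmin Q HQ);
  rewrite !relent_endpoint_reweight // leeD2rE.
Qed.

End Bridge.

Section HTransform.
Variables (R : realType) (n N : nat) (M : nat -> 'M[R]_n) (u : nat -> 'I_n -> R).
Hypothesis u_neq0 : forall t i, (t <= N)%N -> u t i != 0.

Lemma path_weight_htransform (x : spath n N) :
  path_weight (htransform M u) x = path_weight M x * (u N (x ord_max) / u 0%N (x ord0)).
Proof.
rewrite /path_weight; under eq_bigr do rewrite mxE -mulrA.
rewrite big_split /=; congr (_ * _).
pose v k := u k (x (inord k)).
have -> : u N (x ord_max) / u 0%N (x ord0) = v N / v 0%N.
  by rewrite /v; congr (u _ (x _) / u _ (x _)); apply: val_inj; rewrite /= inordK.
have [N0|N_gt0] := posnP N.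
  by subst N; rewrite big_ord0 divff //; apply: u_neq0.
rewrite -telescope_prodf // => [|k /andP[_ kN]]; last by rewrite u_neq0 // ltnW.
rewrite big_mkord; apply: eq_bigr => t _; rewrite /v.
have tN := ltn_ord t.
by congr (u _ (x _) / u _ (x _)); apply: val_inj; rewrite /= inordK ?bump0 // ltnS ltnW.
Qed.

Lemma prior_htransform (mu : 'I_n -> R) :
  prior (N := N) mu (htransform M u) =
  endpoint_reweight (prior mu M) (fun i => (u 0%N i)^-1) (u N).
Proof.
apply/boolp.funext => x; rewrite /prior /endpoint_reweight.
by rewrite -!/(path_weight _ x) path_weight_htransform; ring.
Qed.

Lemma markov_htransform (mu nu : 'I_n -> R) : (forall i, mu i != 0) ->
  markov (N := N) nu (htransform M u) =
  endpoint_reweight (prior mu M) (fun i => nu i / (mu i * u 0%N i)) (u N).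
Proof.
move=> mu_neq0; apply/boolp.funext => x; rewrite /markov /prior /endpoint_reweight.
rewrite -!/(path_weight _ x) path_weight_htransform.
by field; rewrite mu_neq0 u_neq0.
Qed.

End HTransform.

Section SchroedingerSystem.
Variables (R : realType) (n N : nat) (M : nat -> 'M[R]_n) (rho0 rhoN : 'I_n -> R).
Variables (psi psihat : nat -> 'I_n -> R).
Hypothesis psi_gt0 : forall t i, (t <= N)%N -> 0 < psi t i.
Hypothesis psihat_ge0 : forall t i, (t <= N)%N -> 0 <= psihat t i.
Hypothesis M_ge0 : forall t i j, (t < N)%N -> 0 <= M t i j.
Hypothesis sys : schroedinger_system N M rho0 rhoN psi psihat.
Hypothesis rho0_sum1 : \sum_i rho0 i = 1.

Lemma markov_htransformE (x : spath n N) : markov rho0 (htransform M psi) x =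
  psihat 0%N (x ord0) * path_weight M x * psi N (x ord_max).
Proof.
have [_ [_ [sys0 _]]] := sys.
have psi_neq0 t i (tN : (t <= N)%N) : psi t i != 0 := lt0r_neq0 (psi_gt0 i tN).
rewrite /markov -/(path_weight _ x) path_weight_htransform // -sys0.
by field; rewrite psi_neq0.
Qed.

Lemma markov_htransform_admissible :
  admissible rho0 rhoN (markov (N := N) rho0 (htransform M psi)).
Proof.
have [sys_back [sys_forw [sys0 sysN]]] := sys.
have marg0 i : marginal (markov (N := N) rho0 (htransform M psi)) ord0 i = rho0 i.
  rewrite /marginal; under eq_bigr => x /eqP x0 do rewrite markov_htransformE x0 -mulrA.
  by rewrite -big_distrr /= sum_path_weight_backward // -sys0 mulrC.
split=> [x|].
  by rewrite markov_htransformE !mulr_ge0 ?psihat_ge0 ?path_weight_ge0 ?ltW ?psi_gt0.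
split.
  rewrite (partition_big (fun x : spath n N => x ord0) predT) //= -rho0_sum1.
  by apply: eq_bigr => i _; apply: marg0.
split=> // j; rewrite /marginal.
under eq_bigr => x /eqP xN do rewrite markov_htransformE xN.
by rewrite -big_distrl /= sum_path_weight_forward // -sysN mulrC.
Qed.

End SchroedingerSystem.

Theorem mainTheorem1 (R : realType) (n N : nat) (HN : (0 < N)%N)
  (M : nat -> 'M[R]_n)
  (HMnn : forall t i j, (t < N)%N -> 0 <= M t i j)
  (HMpos : forall i j, 0 < mxprod N M i j)
  (nu0 nuN : 'I_n -> R) (Hnu0 : is_distr nu0) (HnuN : is_distr nuN)
  (phi phihat : nat -> 'I_n -> R)
  (Hphi : forall t i, (t <= N)%N -> 0 < phi t i)
  (Hphihat : forall t i, (t <= N)%N -> 0 <= phihat t i)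
  (Hsys : schroedinger_system N M nu0 nuN phi phihat)
  (rho0 rhoN : 'I_n -> R) (Hrho0 : is_distr rho0) (HrhoN : is_distr rhoN)
  (mu0 : 'I_n -> R) (Hmu0 : forall i, 0 < mu0 i) :
  (forall P : spath n N -> R,
     SBP_solution (prior mu0 (htransform M phi)) rho0 rhoN P <->
     SBP_solution (prior mu0 M) rho0 rhoN P) /\
  (forall psi psihat : nat -> 'I_n -> R,
     (forall t i, (t <= N)%N -> 0 < psi t i) ->
     (forall t i, (t <= N)%N -> 0 <= psihat t i) ->
     schroedinger_system N M rho0 rhoN psi psihat ->
     forall P : spath n N -> R,
       (SBP_solution (prior mu0 (htransform M phi)) rho0 rhoN P <->
          forall x, P x = markov rho0 (htransform M psi) x) /\
       (SBP_solution (prior mu0 M) rho0 rhoN P <->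
          forall x, P x = markov rho0 (htransform M psi) x)).
Proof.
have mu0_neq0 i : mu0 i != 0 := lt0r_neq0 (Hmu0 i).
have phi_neq0 t i (tN : (t <= N)%N) : phi t i != 0 := lt0r_neq0 (Hphi t i tN).
have prior_ge0 (x : spath n N) : 0 <= prior mu0 M x.
  by rewrite /prior -/(path_weight M x) mulr_ge0 ?path_weight_ge0 // ltW.
have bridge_phi (P : spath n N -> R) :
    SBP_solution (prior mu0 (htransform M phi)) rho0 rhoN P <->
    SBP_solution (prior mu0 M) rho0 rhoN P.
  rewrite (prior_htransform M phi_neq0); symmetry.
  by apply: SBP_solution_endpoint_reweight => // i _; rewrite ?invr_gt0 Hphi.
split=> // psi psihat Hpsi Hpsihat Hsys_psi P.
have psi_neq0 t i (tN : (t <= N)%N) : psi t i != 0 := lt0r_neq0 (Hpsi t i tN).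
have Qadm := markov_htransform_admissible Hpsi Hpsihat HMnn Hsys_psi (proj2 Hrho0).
have bridge_M : SBP_solution (prior mu0 M) rho0 rhoN P <->
                forall x, P x = markov rho0 (htransform M psi) x.
  rewrite (markov_htransform M psi_neq0 rho0 mu0_neq0) in Qadm *.
  rewrite SBP_solution_endpoint_reweight ?SBP_solution_self // => [i rho0i | j _].
    by rewrite divr_gt0 ?mulr_gt0 ?Hpsi // lt_def rho0i (proj1 Hrho0).
  exact: Hpsi.
by rewrite bridge_phi.
Qed.
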